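(* Let $C$ be an algebraically closed field of characteristic zero. If $H$ is an irreducible and imprimitive algebraic subgroup of $\mathrm{GL}_2(C)$ such that $H/H^\circ$ is bicyclic (a product of two finite cyclic groups), then, up to conjugation, $H$ is the subgroup of \[\{\pm1\}\ltimes\mathbb{G}_m(C)^2=\left\{\begin{pmatrix}\alpha_1&0\\0&\alpha_2\end{pmatrix}:\alpha_1\alpha_2\neq0\right\}\cup\left\{\begin{pmatrix}0&\lambda_1\\\lambda_2&0\end{pmatrix}:\lambda_1\lambda_2\neq0\right\}\] defined by precisely one of the following sets of conditions: (1) $H=D_m^-$ for some $m\in\mathbb{N}$: $(\alpha_1\alpha_2)^m=1$ and $(\lambda_1\lambda_2)^m=-1$; (2) $H=D_m^+$ for some $m\in\mathbb{N}$: $(\alpha_1\alpha_2)^m=1$ and $(\lambda_1\lambda_2)^m=1$; (3) $H=\{\pm1\}^2\ltimes\mathbb{G}_m(C)$: $\alpha_1^2=\alpha_2^2$ and $\lambda_1^2=\lambda_2^2$; (4) $H=\{\pm1\}\ltimes\mathbb{G}_m(C)^2$, with no further conditions.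
   Context: $H^\circ$ denotes the identity component of $H$. A subgroup of $\mathrm{GL}_2(C)$ is irreducible if it has no invariant line in $C^2$, and imprimitive if it is irreducible and conjugate to a subgroup of the group of monomial (invertible diagonal or anti-diagonal) matrices. *)

From HB Require Import structures.
From mathcomp Require Import all_boot all_order all_algebra.
From mathcomp Require Import mpoly.
Set Implicit Arguments. Unset Strict Implicit. Unset Printing Implicit Defensive.
Import Order.TTheory GRing.Theory.
Local Open Scope ring_scope.

Section GL2.
Variable C : closedFieldType.
Notation mx := 'M[C]_2.

Definition mx_coords (g : mx) : 'I_(2 * 2) -> C := fun i => mxvec g 0 i.

Definition zero_locus (S : {mpoly C[2 * 2]} -> Prop) (g : mx) : Prop :=
  forall p, S p -> p.@[mx_coords g] = 0.

Definition is_subgroup_GL2 (H : mx -> Prop) : Prop :=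
  [/\ forall g, H g -> g \in unitmx,
      H 1%:M,
      forall g h, H g -> H h -> H (g *m h)
    & forall g, H g -> H (invmx g)].

Definition zariski_closed_GL2 (H : mx -> Prop) : Prop :=
  exists S, forall g, g \in unitmx -> (H g <-> zero_locus S g).

Definition algebraic_subgroup_GL2 (H : mx -> Prop) : Prop :=
  is_subgroup_GL2 H /\ zariski_closed_GL2 H.

(* Y is connected for the (subspace) Zariski topology: it is not the union
   of two disjoint nonempty relatively closed subsets. *)
Definition zariski_connected (Y : mx -> Prop) : Prop :=
  forall S1 S2 : {mpoly C[2 * 2]} -> Prop,
    (forall g, Y g -> zero_locus S1 g \/ zero_locus S2 g) ->
    (forall g, Y g -> zero_locus S1 g -> zero_locus S2 g -> False) ->
    (forall g, Y g -> zero_locus S1 g) \/ (forall g, Y g -> zero_locus S2 g).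

(* identity component H° : the connected component of 1 in H *)
Definition identity_component (H : mx -> Prop) (g : mx) : Prop :=
  exists Y : mx -> Prop,
    [/\ forall x, Y x -> H x, zariski_connected Y, Y 1%:M & Y g].

(* H/H° is a product of two finite cyclic groups: it is generated by the
   cosets of two elements a, b that commute modulo H° and have finite order
   modulo H°. *)
Definition bicyclic_quotient (H K : mx -> Prop) : Prop :=
  exists a b : mx, exists n m : nat,
    [/\ H a /\ H b, (0 < n)%N /\ (0 < m)%N,
        K (a ^+ n) /\ K (b ^+ m),
        K (a *m b *m invmx a *m invmx b)
      & forall h, H h -> exists i j : nat, K (invmx h *m (a ^+ i *m b ^+ j))].

Definition irreducible_GL2 (H : mx -> Prop) : Prop :=
  ~ exists v : 'cV[C]_2, v != 0 /\ forall h, H h -> exists c : C, h *m v = c *: v.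

Definition diag_nonsing (x : mx) : Prop :=
  [/\ x 0 1 = 0, x 1 0 = 0 & x 0 0 * x 1 1 != 0].
Definition antidiag_nonsing (x : mx) : Prop :=
  [/\ x 0 0 = 0, x 1 1 = 0 & x 0 1 * x 1 0 != 0].
Definition monomial (x : mx) : Prop := diag_nonsing x \/ antidiag_nonsing x.

Definition conj_set (P : mx) (H : mx -> Prop) (x : mx) : Prop :=
  H (P *m x *m invmx P).

Definition imprimitive_GL2 (H : mx -> Prop) : Prop :=
  irreducible_GL2 H /\
  exists P, P \in unitmx /\ forall x, conj_set P H x -> monomial x.

(* The four families: alpha_1 = x 0 0, alpha_2 = x 1 1,
   lambda_1 = x 0 1, lambda_2 = x 1 0. *)
Definition Dminus (m : nat) (x : mx) : Prop :=
  (diag_nonsing x /\ (x 0 0 * x 1 1) ^+ m = 1) \/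
  (antidiag_nonsing x /\ (x 0 1 * x 1 0) ^+ m = -1).
Definition Dplus (m : nat) (x : mx) : Prop :=
  (diag_nonsing x /\ (x 0 0 * x 1 1) ^+ m = 1) \/
  (antidiag_nonsing x /\ (x 0 1 * x 1 0) ^+ m = 1).
Definition Vgroup (x : mx) : Prop :=
  (diag_nonsing x /\ x 0 0 ^+ 2 = x 1 1 ^+ 2) \/
  (antidiag_nonsing x /\ x 0 1 ^+ 2 = x 1 0 ^+ 2).
Definition fullmonomial (x : mx) : Prop := monomial x.

Definition conj_to (H G : mx -> Prop) : Prop :=
  exists P, P \in unitmx /\ forall x, conj_set P H x <-> G x.

Definition case1 (H : mx -> Prop) := exists m : nat, (0 < m)%N /\ conj_to H (Dminus m).
Definition case2 (H : mx -> Prop) := exists m : nat, (0 < m)%N /\ conj_to H (Dplus m).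
Definition case3 (H : mx -> Prop) := conj_to H Vgroup.
Definition case4 (H : mx -> Prop) := conj_to H fullmonomial.

Definition exactly_one4 (A B D E : Prop) : Prop :=
  (A \/ B \/ D \/ E) /\
  [/\ ~ (A /\ B), ~ (A /\ D), ~ (A /\ E), ~ (B /\ D) & ~ (B /\ E) /\ ~ (D /\ E)].
End GL2.

From HB Require Import structures.
From mathcomp Require Import all_boot all_order all_algebra.
From mathcomp Require Import mpoly.
From Stdlib Require Import Classical ClassicalEpsilon.
From mathcomp Require Import ring.
Import GRing.Theory.
Local Open Scope ring_scope.
Set Implicit Arguments. Unset Strict Implicit. Unset Printing Implicit Defensive.

(* Conjugated by the imprimitivity matrix P0, H becomes a group G of monomial
   matrices containing, by irreducibility, an antidiagonal w = ad l1 l2.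
   Zariski closedness shows that G either contains a Laurent curve of
   diagonal matrices or meets it finitely; we use the torus diag(s, 1/s) and
   the scalars diag(s, s).  Both in G: G is the full monomial group (case 4).
   Torus only: {d | diag(d, 1) in G} is a finite subgroup of C^*, so G is
   D_m^+ or D_m^- (cases 1, 2).  Finite torus part: connectedness puts H^0
   in the scalars, bicyclicity makes G commutative up to a scalar, hence
   G = {+-1}^2 x| G_m after a diagonal rescaling (case 3).  Exclusivity uses
   conjugation invariants (determinant, trace, scalar squares). *)

Ltac field_ctx := field; repeat (apply/andP; split).

Lemma ord2P (i : 'I_2) : i = 0 \/ i = 1.
Proof. by case: i => [[|[|//]] Hi]; [left|right]; apply/val_inj. Qed.

Lemma big_ord2 (R : nmodType) (F : 'I_2 -> R) : \sum_(i < 2) F i = F 0 + F 1.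
Proof. by rewrite !big_ord_recl big_ord0 addr0; congr (_ + F _); apply/val_inj. Qed.

Lemma mx2P (T : Type) (A B : 'M[T]_2) : A 0 0 = B 0 0 -> A 0 1 = B 0 1 ->
  A 1 0 = B 1 0 -> A 1 1 = B 1 1 -> A = B.
Proof.
move=> h00 h01 h10 h11; apply/matrixP => i j.
by case: (ord2P i) => ->; case: (ord2P j) => ->.
Qed.

Section TwoByTwo.
Variable R : fieldType.
Notation mx := 'M[R]_2.

Lemma mulmx2E (A B : mx) i j : (A *m B) i j = A i 0 * B 0 j + A i 1 * B 1 j.
Proof. by rewrite mxE big_ord2. Qed.

Definition mk2 (a b c d : R) : mx :=
  \matrix_(i < 2, j < 2) if i == 0 then (if j == 0 then a else b)
                         else (if j == 0 then c else d).

Lemma mk2_00 a b c d : mk2 a b c d 0 0 = a. Proof. by rewrite mxE. Qed.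
Lemma mk2_01 a b c d : mk2 a b c d 0 1 = b. Proof. by rewrite mxE. Qed.
Lemma mk2_10 a b c d : mk2 a b c d 1 0 = c. Proof. by rewrite mxE. Qed.
Lemma mk2_11 a b c d : mk2 a b c d 1 1 = d. Proof. by rewrite mxE. Qed.

Lemma mk2_eta (A : mx) : A = mk2 (A 0 0) (A 0 1) (A 1 0) (A 1 1).
Proof. by apply: mx2P; rewrite mxE. Qed.

Lemma mk2M a b c d a' b' c' d' :
  mk2 a b c d *m mk2 a' b' c' d' =
  mk2 (a * a' + b * c') (a * b' + b * d') (c * a' + d * c') (c * b' + d * d').
Proof. by apply: mx2P; rewrite mulmx2E !mxE. Qed.

Lemma mk2_scalar a : (a%:M : mx) = mk2 a 0 0 a.
Proof. by apply: mx2P; rewrite !mxE. Qed.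

Lemma det2 (A : mx) : \det A = A 0 0 * A 1 1 - A 0 1 * A 1 0.
Proof.
rewrite (expand_det_row _ 0) big_ord2 /cofactor !det_mx11 !mxE /=.
rewrite !expr0 !mul1r expr1 mulN1r.
have -> : lift 0 (0:'I_1) = 1 :> 'I_2 by apply/val_inj.
have -> : lift 1 (0:'I_1) = 0 :> 'I_2 by apply/val_inj.
by rewrite mulrN.
Qed.

Lemma tr2 (A : mx) : \tr A = A 0 0 + A 1 1.
Proof. by rewrite /mxtrace big_ord2. Qed.

Lemma inv_uniq (A B : mx) : A *m B = 1%:M -> invmx A = B.
Proof.
move=> AB; have [uA _] := mulmx1_unit AB.
by rewrite -[invmx A]mulmx1 -AB mulmxA mulVmx // mul1mx.
Qed.

Definition dg (a b : R) : mx := mk2 a 0 0 b.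
Definition ad (a b : R) : mx := mk2 0 a b 0.

Lemma dgM a b c d : dg a b *m dg c d = dg (a * c) (b * d).
Proof. by rewrite /dg mk2M; congr mk2; ring. Qed.
Lemma adM a b c d : ad a b *m ad c d = dg (a * d) (b * c).
Proof. by rewrite /dg /ad mk2M; congr mk2; ring. Qed.
Lemma addgM a b c d : ad a b *m dg c d = ad (a * d) (b * c).
Proof. by rewrite /dg /ad mk2M; congr mk2; ring. Qed.
Lemma dgadM a b c d : dg a b *m ad c d = ad (a * c) (b * d).
Proof. by rewrite /dg /ad mk2M; congr mk2; ring. Qed.

Lemma dg1 : dg 1 1 = 1%:M.
Proof. by rewrite mk2_scalar. Qed.
Lemma dg_scalar a : dg a a = a%:M.
Proof. by rewrite mk2_scalar. Qed.

Lemma dg_inv a b : a != 0 -> b != 0 -> invmx (dg a b) = dg a^-1 b^-1.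
Proof. by move=> a0 b0; apply: inv_uniq; rewrite dgM !mulfV // dg1. Qed.
Lemma ad_inv a b : a != 0 -> b != 0 -> invmx (ad a b) = ad b^-1 a^-1.
Proof. by move=> a0 b0; apply: inv_uniq; rewrite adM !mulfV // dg1. Qed.
Lemma dg_unit a b : a != 0 -> b != 0 -> dg a b \in unitmx.
Proof.
move=> a0 b0; have e : dg a b *m dg a^-1 b^-1 = 1%:M by rewrite dgM !mulfV // dg1.
by case: (mulmx1_unit e).
Qed.

Lemma det_dg a b : \det (dg a b) = a * b.
Proof. by rewrite det2 /dg mk2_00 mk2_11 mk2_01 mul0r subr0. Qed.
Lemma tr_dg a b : \tr (dg a b) = a + b.
Proof. by rewrite tr2 /dg mk2_00 mk2_11. Qed.
Lemma det_ad a b : \det (ad a b) = - (a * b).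
Proof. by rewrite det2 /ad mk2_00 mk2_01 mk2_10 mul0r sub0r. Qed.
Lemma tr_ad a b : \tr (ad a b) = 0.
Proof. by rewrite tr2 /ad mk2_00 mk2_11 addr0. Qed.

Definition cv (a b : R) : 'cV[R]_2 := \col_i (if i == 0 then a else b).

Lemma mk2_cv (p q r s a b : R) :
  mk2 p q r s *m cv a b = cv (p * a + q * b) (r * a + s * b).
Proof.
apply/matrixP => i j; rewrite (ord1 j) !mxE big_ord2 !mxE.
by case: (ord2P i) => ->.
Qed.

Lemma cv_scale (c a b : R) : c *: cv a b = cv (c * a) (c * b).
Proof. by apply/matrixP => i j; rewrite !mxE; case: (i == 0). Qed.

Lemma cv_nz (a b : R) : a != 0 -> cv a b != 0.
Proof. by move=> a0; apply/eqP => /matrixP /(_ 0 0); rewrite !mxE /=; apply/eqP. Qed.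

End TwoByTwo.

Section MonomialMatrices.
Variable C : closedFieldType.
Notation mx := 'M[C]_2.

Lemma diag_dg (x : mx) : diag_nonsing x ->
  [/\ x = dg (x 0 0) (x 1 1), x 0 0 != 0 & x 1 1 != 0].
Proof.
case=> h1 h2; rewrite mulf_eq0 negb_or => /andP [a0 b0]; split => //.
by rewrite [x in LHS]mk2_eta h1 h2.
Qed.
Lemma antidiag_ad (x : mx) : antidiag_nonsing x ->
  [/\ x = ad (x 0 1) (x 1 0), x 0 1 != 0 & x 1 0 != 0].
Proof.
case=> h1 h2; rewrite mulf_eq0 negb_or => /andP [a0 b0]; split => //.
by rewrite [x in LHS]mk2_eta h1 h2.
Qed.
Lemma dg_diag (a b : C) : a != 0 -> b != 0 -> diag_nonsing (dg a b).
Proof. by move=> a0 b0; split; rewrite /dg ?mk2_01 ?mk2_10 ?mk2_00 ?mk2_11 // mulf_neq0. Qed.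
Lemma ad_antidiag (a b : C) : a != 0 -> b != 0 -> antidiag_nonsing (ad a b).
Proof. by move=> a0 b0; split; rewrite /ad ?mk2_01 ?mk2_10 ?mk2_00 ?mk2_11 // mulf_neq0. Qed.

Lemma monomial_dg_mul (a b c e : C) (y : mx) : a != 0 -> b != 0 -> c != 0 -> e != 0 ->
  monomial y -> monomial (dg a b *m y *m dg c e).
Proof.
move=> a0 b0 c0 e0 [/diag_dg [ey p0 q0]|/antidiag_ad [ey p0 q0]]; rewrite ey.
  by left; rewrite !dgM; apply: dg_diag; rewrite !mulf_neq0.
by right; rewrite dgadM addgM; apply: ad_antidiag; rewrite !mulf_neq0.
Qed.

End MonomialMatrices.

Lemma exists_nth_root (C : closedFieldType) (z : C) n : (0 < n)%N ->
  exists c : C, c ^+ n = z.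
Proof.
move=> n0; have : size ('X^n - z%:P : {poly C}) != 1.
  by rewrite size_XnsubC // eqSS -lt0n.
by case/closed_rootP => c; rewrite /root !hornerE subr_eq0 => /eqP; exists c.
Qed.

Lemma roots_in (C : closedFieldType) (q : {poly C}) : q != 0 ->
  exists r : seq C, forall s, q.[s] = 0 -> s \in r.
Proof.
move=> q0; have [r hr] := closed_field_poly_normal q; exists r => s.
rewrite {1}hr hornerZ horner_prod => /eqP; rewrite mulf_eq0 lead_coef_eq0 (negbTE q0) /=.
by rewrite prodf_seq_eq0 => /hasP [z zr]; rewrite hornerXsubC subr_eq0 => /eqP ->.
Qed.

(* If k^e1 b = k^e2 a and k^e1 a = k^e2 b, then b = a or b = -a: indeed
   (k^e1)^2 b = (k^e2)^2 b. *)
Lemma twisted_sign (F : fieldType) (k a b : F) (e1 e2 : nat) : k != 0 -> b != 0 ->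
  k ^+ e1 * b = k ^+ e2 * a -> k ^+ e1 * a = k ^+ e2 * b -> b = a \/ b = - a.
Proof.
move=> k0 b0 h1 h2; have c10 : k ^+ e1 != 0 by rewrite expf_neq0.
have : (k ^+ e1) ^+ 2 * b = (k ^+ e2) ^+ 2 * b.
  by rewrite !expr2 -!mulrA h1 mulrCA h2 mulrCA.
move/(mulIf b0)/eqP; rewrite eqf_sqr => /orP [] /eqP e; [left|right];
  by apply: (mulfI c10); rewrite h1 e ?mulNr ?mulrN ?opprK.
Qed.

Definition holds (P : Prop) : bool := if excluded_middle_informative P then true else false.
Lemma holdsP (P : Prop) : holds P <-> P.
Proof. by rewrite /holds; case: excluded_middle_informative. Qed.

Section FiniteSubgroups.
Variable F : fieldType.
Variable L : seq F.
Hypotheses (uL : uniq L) (L1 : 1 \in L) (L0 : 0 \notin L).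
Hypothesis Lmul : forall x y, x \in L -> y \in L -> x * y \in L.

(* Lagrange for a finite multiplicative subgroup of F: multiplication by x
   permutes L, so comparing products gives x ^+ size L = 1. *)
Lemma finite_subgroup_exp x : x \in L -> x ^+ size L = 1.
Proof.
move=> xL; have x0 : x != 0 by apply: contraNneq L0 => <-.
have um : uniq (map (fun y => x * y) L) by rewrite map_inj_uniq //; exact: mulfI.
have sub : {subset map (fun y => x * y) L <= L} by move=> z /mapP [y yL ->]; apply: Lmul.
have [_ eqm] := uniq_min_size um sub (eq_leq (esym (size_map _ _))).
have := perm_big (x := 1) (op := *%R) _ (uniq_perm um uL eqm) (P := predT) (F := id).
rewrite big_map big_split /= => e.
have P0 : \prod_(y <- L) y != 0.
  by rewrite prodf_seq_neq0; apply/allP => y yL /=; apply: contraNneq L0 => <-.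
have ex : \prod_(y <- L) x = x ^+ size L.
  by elim: (L) => [|z s ih]; rewrite ?big_nil ?expr0 // big_cons ih exprS.
by apply: (mulIf P0); rewrite mul1r -ex.
Qed.

(* Hence L is exactly the group of (size L)-th roots of unity, as the
   polynomial X^(size L) - 1 has at most size L roots. *)
Lemma finite_subgroup_roots x : (x \in L) = (x ^+ size L == 1).
Proof.
have m0 : (0 < size L)%N by case: L L1.
apply/idP/idP => [xL|/eqP xm]; first by rewrite finite_subgroup_exp.
apply/negPn/negP => xL.
have ha : all (root ('X^(size L) - 1)) (x :: L).
  apply/allP => z; rewrite inE => /orP [/eqP ->|zL].
    by rewrite /root !hornerE xm subrr.
  by rewrite /root !hornerE finite_subgroup_exp // subrr.
have nz : ('X^(size L) - 1 : {poly F}) != 0 by rewrite -size_poly_eq0 size_XnsubC.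
have := max_poly_roots nz ha; rewrite /= xL uL size_XnsubC // ltnn.
by move/(_ isT).
Qed.

End FiniteSubgroups.

Section TwistedCommutation.
Variables (R : comNzRingType) (A : algType R).
Variables (a b : A) (k : R).
Hypothesis hab : a * b = k *: (b * a).

Lemma twisted_comm_exp j : k ^+ j *: (b ^+ j * a) = a * b ^+ j.
Proof.
elim: j => [|j ih]; first by rewrite !expr0 scale1r mul1r mulr1.
rewrite [k ^+ _]exprS [b ^+ _]exprS -scalerA -mulrA scalerAr ih mulrA scalerAl.
by rewrite mulrA -scalerAl -hab.
Qed.

Lemma twisted_comm_exp2 j i : k ^+ (j * i) *: (b ^+ j * a ^+ i) = a ^+ i * b ^+ j.
Proof.
elim: i => [|i ih]; first by rewrite muln0 !expr0 scale1r mul1r mulr1.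
rewrite mulnS exprD -scalerA exprSr mulrA scalerAl ih.
by rewrite -[a ^+ i * b ^+ j * a]mulrA scalerAr twisted_comm_exp mulrA.
Qed.

Lemma twisted_comm_word i j i' j' :
  k ^+ (j * i') *: (a ^+ i * b ^+ j * (a ^+ i' * b ^+ j')) =
  a ^+ (i + i') * b ^+ (j + j').
Proof.
rewrite -mulrA [b ^+ j * _]mulrA scalerAr scalerAl twisted_comm_exp2.
by rewrite !mulrA -exprD -mulrA -exprD.
Qed.

End TwistedCommutation.

(* Laurent-polynomial functions: f : F -> F agrees off 0 with q(s) / s^N for
   a polynomial q.  They are closed under the ring operations and under
   evaluation of multivariate polynomials, so a polynomial equation
   restricted to a Laurent curve is either identically true on F^* or has
   finitely many solutions. *)
Section LaurentFunctions.
Variable F : fieldType.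

Definition laurent (f : F -> F) : Prop := exists (q : {poly F}) (N : nat),
  forall s, s != 0 -> q.[s] = s ^+ N * f s.

Lemma laurent_const c : laurent (fun _ => c).
Proof. by exists c%:P, 0%N => s _; rewrite hornerC expr0 mul1r. Qed.

Lemma laurent_id : laurent id.
Proof. by exists 'X, 0%N => s _; rewrite hornerX expr0 mul1r. Qed.

Lemma laurent_inv : laurent (fun s => s^-1).
Proof. by exists 1, 1%N => s s0; rewrite hornerC expr1 mulfV. Qed.

Lemma laurentD f g : laurent f -> laurent g -> laurent (fun s => f s + g s).
Proof.
move=> [q1 [N1 h1]] [q2 [N2 h2]].
exists (q1 * 'X^N2 + q2 * 'X^N1), (N1 + N2)%N => s s0.
by rewrite hornerD !hornerM !hornerXn h1 // h2 // exprD; ring.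
Qed.

Lemma laurentM f g : laurent f -> laurent g -> laurent (fun s => f s * g s).
Proof.
move=> [q1 [N1 h1]] [q2 [N2 h2]].
by exists (q1 * q2), (N1 + N2)%N => s s0; rewrite hornerM h1 // h2 // exprD; ring.
Qed.

Lemma eq_laurent f g : (forall s, s != 0 -> f s = g s) -> laurent f -> laurent g.
Proof. by move=> e [q [N h]]; exists q, N => s s0; rewrite h // e. Qed.

Lemma laurentX f k : laurent f -> laurent (fun s => f s ^+ k).
Proof.
move=> hf; elim: k => [|k ih]; first by apply: eq_laurent (laurent_const 1) => s _.
by apply: eq_laurent (laurentM hf ih) => s _; rewrite exprS.
Qed.

Lemma laurent_sum (I : Type) (r : seq I) (G : I -> F -> F) :
  (forall i, laurent (G i)) -> laurent (fun s => \sum_(i <- r) G i s).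
Proof.
move=> hG; elim: r => [|i r ih].
  by apply: eq_laurent (laurent_const 0) => s _; rewrite big_nil.
by apply: eq_laurent (laurentD (hG i) ih) => s _; rewrite big_cons.
Qed.

Lemma laurent_prod (I : Type) (r : seq I) (G : I -> F -> F) :
  (forall i, laurent (G i)) -> laurent (fun s => \prod_(i <- r) G i s).
Proof.
move=> hG; elim: r => [|i r ih].
  by apply: eq_laurent (laurent_const 1) => s _; rewrite big_nil.
by apply: eq_laurent (laurentM (hG i) ih) => s _; rewrite big_cons.
Qed.

Lemma laurent_meval n (p : {mpoly F[n]}) (v : F -> 'I_n -> F) :
  (forall k, laurent (fun s => v s k)) -> laurent (fun s => p.@[v s]).
Proof.
move=> hv; apply: eq_laurent (fun s _ => esym (mevalE _ _)) _.
apply: laurent_sum => m; apply: laurentM; first exact: laurent_const.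
by apply: laurent_prod => i; apply: laurentX.
Qed.

End LaurentFunctions.

Section ZariskiGL2.
Variable C : closedFieldType.
Notation mx := 'M[C]_2.

Lemma laurent_conj_coords (P Q A B : mx) (a b : C -> C) k :
  laurent a -> laurent b ->
  laurent (fun s => mx_coords (P *m (a s *: A + b s *: B) *m Q) k).
Proof.
move=> ha hb.
apply: eq_laurent (laurentD (laurentM ha (laurent_const (mx_coords (P *m A *m Q) k)))
                            (laurentM hb (laurent_const (mx_coords (P *m B *m Q) k)))) => s _.
rewrite /mx_coords mulmxDr mulmxDl -!scalemxAr -!scalemxAl.
by rewrite linearD !linearZ /= !mxE.
Qed.

Lemma closed_curve_dichotomy (H : mx -> Prop) (S : {mpoly C[2 * 2]} -> Prop)
  (hcl : forall g, g \in unitmx -> (H g <-> zero_locus S g))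
  (gam : C -> mx) (hunit : forall s, s != 0 -> gam s \in unitmx)
  (hgam : forall k, laurent (fun s => mx_coords (gam s) k)) :
  (forall s, s != 0 -> H (gam s)) \/
  exists q : {poly C}, q != 0 /\ forall s, s != 0 -> H (gam s) -> q.[s] = 0.
Proof.
case: (classic (forall s, s != 0 -> H (gam s))) => [|hout]; [by left | right].
have [s0 [s00 nH]] : exists s0, s0 != 0 /\ ~ H (gam s0).
  by apply: NNPP => hn; apply: hout => s s0; apply: NNPP => nH; apply: hn; exists s; split.
have [p [Sp pn]] : exists p, S p /\ p.@[mx_coords (gam s0)] != 0.
  apply: NNPP => hn; apply: nH; apply/(hcl _ (hunit _ s00)) => p Sp.
  by apply: NNPP => hp; apply: hn; exists p; split => //; apply/eqP.
have [q [N hq]] := laurent_meval p hgam.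
exists q; split.
  apply/eqP => q0; have := hq s0 s00; rewrite q0 horner0 => /esym /eqP.
  by rewrite mulf_eq0 (negbTE pn) orbF expf_eq0 (negbTE s00) andbF.
by move=> s sn0 Hs; rewrite hq // ((hcl _ (hunit _ sn0)).1 Hs p Sp) mulr0.
Qed.

Lemma meval_prod (r : seq C) (P : pred C) (G : C -> {mpoly C[2 * 2]}) v :
  (\prod_(rho <- r | P rho) G rho).@[v] = \prod_(rho <- r | P rho) (G rho).@[v].
Proof. exact: (big_morph (meval v) (mevalM v) (meval1 v)). Qed.

(* If a connected Y is covered by finitely many pairwise disjoint zero sets
   Z(G rho), rho \in r, and Z(G rho0) meets Y, then Y lies in Z(G rho0):
   otherwise Z(G rho0) and the union of the other Z(G rho) disconnect Y. *)
Lemma connected_in_one_fiber (Y : mx -> Prop) (hY : zariski_connected Y)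
  (r : seq C) (G : C -> {mpoly C[2 * 2]}) (rho0 : C)
  (cover : forall x, Y x -> exists2 rho, rho \in r & (G rho).@[mx_coords x] = 0)
  (disj : forall x, Y x -> forall rho, rho \in r -> rho != rho0 ->
     (G rho).@[mx_coords x] = 0 -> (G rho0).@[mx_coords x] = 0 -> False)
  (x1 : mx) (Yx1 : Y x1) (base : (G rho0).@[mx_coords x1] = 0) :
  forall x, Y x -> (G rho0).@[mx_coords x] = 0.
Proof.
pose S1 := fun p => p = G rho0.
pose S2 := fun p => p = \prod_(rho <- r | rho != rho0) G rho.
have E1 x : zero_locus S1 x <-> (G rho0).@[mx_coords x] = 0.
  by split => [h|h p ->]; [apply: h|].
have E2 x : zero_locus S2 x <->
    exists rho, [/\ rho \in r, rho != rho0 & (G rho).@[mx_coords x] = 0].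
  split => [h|[rho [rr rn g0]] p ->].
    have := h _ erefl; rewrite meval_prod => /eqP; rewrite prodf_seq_eq0.
    by case/hasP => rho rr /andP [rn /eqP g0]; exists rho.
  apply/eqP; rewrite meval_prod prodf_seq_eq0; apply/hasP; exists rho => //.
  by rewrite rn g0 eqxx.
have hc g : Y g -> zero_locus S1 g \/ zero_locus S2 g.
  move=> Yg; have [rho rr g0] := cover g Yg.
  case: (eqVneq rho rho0) => [e|ne]; [left; apply/E1; rewrite -e // | right; apply/E2].
  by exists rho.
have hd g : Y g -> zero_locus S1 g -> zero_locus S2 g -> False.
  by move=> Yg /E1 h1 /E2 [rho [rr rn g0]]; exact: (disj g Yg rho rr rn g0 h1).
case: (hY S1 S2 hc hd) => [h x Yx|h]; first exact/E1/h.
by have /E2 [rho [rr rn g0]] := h x1 Yx1; case: (disj x1 Yx1 rho rr rn g0 base).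
Qed.

Definition conj_entry (P Q : mx) i j : {mpoly C[2 * 2]} :=
  \sum_(k < 2) \sum_(l < 2) (P i k * Q l j) *: 'X_(mxvec_index k l).

Lemma conj_entryE P Q (x : mx) i j :
  (conj_entry P Q i j).@[mx_coords x] = (P *m x *m Q) i j.
Proof.
rewrite /conj_entry !big_ord2 !mevalD !mevalZ !mevalXU /mx_coords !mxvecE !mulmx2E.
ring.
Qed.

End ZariskiGL2.

Section Subgroups.
Variable C : closedFieldType.
Notation mx := 'M[C]_2.

Section Laws.
Variable G : mx -> Prop.
Hypothesis hG : is_subgroup_GL2 G.

Lemma subgroup_unit x : G x -> x \in unitmx. Proof. by case: hG => hu _ _ _; apply: hu. Qed.
Lemma subgroup1 : G 1%:M. Proof. by case: hG. Qed.
Lemma subgroupM x y : G x -> G y -> G (x *m y).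
Proof. by case: hG => _ _ hM _; apply: hM. Qed.
Lemma subgroupV x : G x -> G (invmx x). Proof. by case: hG => _ _ _ hV; apply: hV. Qed.

End Laws.

Variable P : mx.
Hypothesis hP : P \in unitmx.

Lemma conjK x : P *m (invmx P *m x *m P) *m invmx P = x.
Proof. by rewrite !mulmxA mulmxV // mul1mx -mulmxA mulmxV // mulmx1. Qed.
Lemma conjVK x : invmx P *m (P *m x *m invmx P) *m P = x.
Proof. by rewrite !mulmxA mulVmx // mul1mx -mulmxA mulVmx // mulmx1. Qed.

Lemma conj_scalar a : P *m a%:M *m invmx P = a%:M.
Proof. by rewrite mul_mx_scalar -scalemxAl mulmxV // scalemx1. Qed.

Lemma conjM u v : P *m u *m invmx P *m (P *m v *m invmx P) = P *m (u *m v) *m invmx P.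
Proof. by rewrite !mulmxA mulmxKV. Qed.

Lemma conj_setE (H : mx -> Prop) g : H g -> conj_set P H (invmx P *m g *m P).
Proof. by rewrite /conj_set conjK. Qed.

Lemma conj_subgroup (H : mx -> Prop) :
  is_subgroup_GL2 H -> is_subgroup_GL2 (conj_set P H).
Proof.
move=> hH; rewrite /conj_set; split.
- move=> x /(subgroup_unit hH); rewrite !unitmx_mul => /andP [/andP [_ ->]] //.
- by rewrite mulmx1 mulmxV //; exact: subgroup1 hH.
- by move=> x y hx hy; rewrite -conjM; exact: subgroupM.
- move=> x hx; have ux : x \in unitmx.
    by move: (subgroup_unit hH hx); rewrite !unitmx_mul => /andP [/andP [_ ->]].
  suff -> : P *m invmx x *m invmx P = invmx (P *m x *m invmx P) by apply: subgroupV.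
  by apply/esym/inv_uniq; rewrite !mulmxA mulmxKV // mulmxK // mulmxV.
Qed.

Lemma conj_irreducible (H : mx -> Prop) :
  irreducible_GL2 H -> irreducible_GL2 (conj_set P H).
Proof.
move=> hirr [v [v0 hv]]; apply: hirr; exists (P *m v); split.
  by apply: contraNneq v0 => e; rewrite -(mulKmx hP v) e mulmx0.
move=> h Hh; have [c hc] := hv _ (conj_setE Hh); exists c.
by rewrite -{1}(conjK h) -mulmxA (mulmxA (invmx P)) mulVmx // mul1mx -mulmxA hc scalemxAr.
Qed.

Lemma conj_setM (H : mx -> Prop) (Q : mx) x : Q \in unitmx ->
  conj_set (P *m Q) H x <-> conj_set P H (Q *m x *m invmx Q).
Proof.
move=> hQ; rewrite /conj_set; have -> : invmx (P *m Q) = invmx Q *m invmx P.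
  by apply: inv_uniq; rewrite mulmxA mulmxK // mulmxV.
by rewrite !mulmxA.
Qed.

End Subgroups.

(* Bicyclicity of H / K, for K inside the scalars, makes any two elements of
   H commute up to a power of a fixed scalar k (the scalar by which the two
   generators fail to commute); k = 1 when K is trivial. *)
Lemma bicyclic_twisted_comm (C : closedFieldType) (H K : 'M[C]_2 -> Prop)
  (hunit : forall g, H g -> g \in unitmx)
  (hK : forall g, K g -> exists c, g = c%:M) :
  bicyclic_quotient H K ->
  exists k : C, [/\ k != 0, ((forall g, K g -> g = 1%:M) -> k = 1) &
    forall h h', H h -> H h' -> exists e1 e2 : nat,
      k ^+ e1 *: (h *m h') = k ^+ e2 *: (h' *m h)].
Proof.
case=> a [b [n [m [[Ha Hb] _ _ Kc hall]]]].
have Ua := hunit _ Ha; have Ub := hunit _ Hb.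
have [k ek] := hK _ Kc.
have hab : a * b = k *: (b * a).
  rewrite -mul_scalar_mx -ek !mulmxE -!mulrA.
  have -> : invmx a = a^-1 by [].
  have -> : invmx b = b^-1 by [].
  by rewrite [b^-1 * (b * a)]mulrA mulVr // mul1r mulVr // mulr1.
have unit_nz (x : 'M[C]_2) : x \in unitmx -> x != 0.
  by apply: contraTneq => ->; rewrite unitmxE det0 unitr0.
have k0 : k != 0.
  apply/eqP => k0; have : (a *m b) \in unitmx by rewrite unitmx_mul Ua Ub.
  by rewrite mulmxE hab k0 scale0r => /unit_nz; rewrite eqxx.
exists k; split => // [trivK|h h' Hh Hh'].
  by have := trivK _ Kc; rewrite ek => /matrixP /(_ 0 0); rewrite !mxE.
have word g : H g -> exists i j (mu : C), mu != 0 /\ a ^+ i * b ^+ j = mu *: g.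
  move=> Hg; have [i [j Kij]] := hall g Hg; have [mu emu] := hK _ Kij.
  have e : a ^+ i * b ^+ j = mu *: g.
    by rewrite -mul_mx_scalar -emu mulmxA mulmxV ?mul1mx // (hunit _ Hg).
  exists i, j, mu; split => //; apply/eqP => mu0; move: e; rewrite mu0 scale0r => e.
  have : (a ^+ i *m b ^+ j) \in unitmx by rewrite unitmx_mul !unitrX.
  by rewrite mulmxE e => /unit_nz; rewrite eqxx.
have [i [j [mu [mu0 e]]]] := word h Hh; have [i' [j' [mu' [mu0' e']]]] := word h' Hh'.
exists (j * i')%N, (j' * i)%N.
have h2 := twisted_comm_word hab i' j' i j.
rewrite addnC [(j' + j)%N]addnC -(twisted_comm_word hab i j i' j') e e' in h2.
move: h2; rewrite -!scalerAl -!scalerAr !scalerA => h2.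
apply: (scalerI (mulf_neq0 mu0 mu0')); rewrite !scalerA !mulmxE.
have -> : mu * mu' * k ^+ (j * i') = k ^+ (j * i') * mu * mu' by ring.
have -> : mu * mu' * k ^+ (j' * i) = k ^+ (j' * i) * mu' * mu by ring.
by rewrite h2.
Qed.

Lemma monomial_members (C : closedFieldType) (G : 'M[C]_2 -> Prop)
  (hmono : forall x, G x -> monomial x) (pd pa : C -> C -> Prop) :
  (forall a b, a != 0 -> b != 0 -> G (dg a b) <-> pd a b) ->
  (forall a b, a != 0 -> b != 0 -> G (ad a b) <-> pa a b) ->
  forall x, G x <-> (diag_nonsing x /\ pd (x 0 0) (x 1 1)) \/
                    (antidiag_nonsing x /\ pa (x 0 1) (x 1 0)).
Proof.
move=> hd ha x; split => [Gx|].
  case: (hmono x Gx) => [xd|xa]; [left|right]; split => //.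
    by have [ex a0 b0] := diag_dg xd; apply/(hd _ _ a0 b0); rewrite -ex.
  by have [ex a0 b0] := antidiag_ad xa; apply/(ha _ _ a0 b0); rewrite -ex.
case=> [[/diag_dg [ex a0 b0] p]|[/antidiag_ad [ex a0 b0] p]]; rewrite ex.
  exact/(hd _ _ a0 b0).
exact/(ha _ _ a0 b0).
Qed.

Section MonomialGroup.
Variable C : closedFieldType.
Notation mx := 'M[C]_2.
Variables (H : mx -> Prop) (P0 : mx).
Hypotheses (hsub : is_subgroup_GL2 H) (hP0 : P0 \in unitmx).
Hypothesis hmono : forall x, conj_set P0 H x -> monomial x.
Hypothesis hirr : irreducible_GL2 H.
Local Notation G := (conj_set P0 H).

Lemma G_subgroup : is_subgroup_GL2 G. Proof. exact: conj_subgroup. Qed.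
Lemma G1 : G 1%:M. Proof. exact: (subgroup1 G_subgroup). Qed.
Lemma GM x y : G x -> G y -> G (x *m y). Proof. exact: (subgroupM G_subgroup). Qed.
Lemma GV x : G x -> G (invmx x). Proof. exact: (subgroupV G_subgroup). Qed.

Lemma diag_member_nz a b : G (dg a b) -> a != 0 /\ b != 0.
Proof.
case/hmono => [[_ _]|[]]; rewrite /dg ?mk2_00 ?mk2_11 ?mk2_01 ?mk2_10.
  by rewrite mulf_eq0 negb_or => /andP.
by rewrite mulr0 eqxx.
Qed.

(* G is not contained in the diagonal group, as it would fix the first
   coordinate line. *)
Lemma exists_antidiag : exists l1 l2, [/\ l1 != 0, l2 != 0 & G (ad l1 l2)].
Proof.
apply: NNPP => hn; apply: (conj_irreducible hP0 hirr); exists (cv 1 0).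
split => [|x Gx]; first exact: cv_nz (oner_neq0 C).
case: (hmono Gx) => [/diag_dg [ex _ _]|/antidiag_ad [ex l10 l20]].
  by exists (x 0 0); rewrite {1}ex /dg mk2_cv cv_scale; congr cv; ring.
by case: hn; exists (x 0 1), (x 1 0); split => //; rewrite -ex.
Qed.

Definition contains_curve (gam : C -> mx) : Prop := forall s, s != 0 -> G (gam s).
Definition meets_finitely (gam : C -> mx) : Prop :=
  exists q : {poly C}, q != 0 /\ forall s, s != 0 -> G (gam s) -> q.[s] = 0.

Variable S : {mpoly C[2 * 2]} -> Prop.
Hypothesis hcl : forall g, g \in unitmx -> (H g <-> zero_locus S g).
Hypothesis hbic : bicyclic_quotient H (identity_component H).

Lemma dg_curve_dichotomy (a b : C -> C) : laurent a -> laurent b ->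
  (forall s, s != 0 -> a s != 0 /\ b s != 0) ->
  contains_curve (fun s => dg (a s) (b s)) \/ meets_finitely (fun s => dg (a s) (b s)).
Proof.
move=> ha hb hab.
apply: (closed_curve_dichotomy hcl (gam := fun s => P0 *m dg (a s) (b s) *m invmx P0)).
  move=> s s0; have [a0 b0] := hab s s0.
  by rewrite !unitmx_mul hP0 unitmx_inv hP0 dg_unit.
move=> k.
apply: eq_laurent (laurent_conj_coords P0 (invmx P0) (dg 1 0) (dg 0 1) k ha hb) => s _.
congr (mx_coords (_ *m _ *m _) k).
by apply: mx2P; rewrite !mxE /= ?mulr1 ?mulr0 ?addr0 ?add0r.
Qed.

Lemma torus_dichotomy :
  contains_curve (fun s => dg s s^-1) \/ meets_finitely (fun s => dg s s^-1).
Proof.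
apply: dg_curve_dichotomy (@laurent_id C) (@laurent_inv C) _ => s s0.
by rewrite invr_eq0.
Qed.

Lemma scalar_dichotomy :
  contains_curve (fun s => dg s s) \/ meets_finitely (fun s => dg s s).
Proof. exact: dg_curve_dichotomy (@laurent_id C) (@laurent_id C) _. Qed.

(* Fix an antidiagonal element w = ad l1 l2 of G.  Conjugation by w swaps
   the diagonal entries, and w translates the antidiagonal part of G to its
   diagonal part. *)
Section Antidiagonal.
Variables l1 l2 : C.
Hypotheses (l10 : l1 != 0) (l20 : l2 != 0) (Gw : G (ad l1 l2)).

Lemma swap_member a b : G (dg a b) -> G (dg b a).
Proof.
move=> h; have [a0 b0] := diag_member_nz h.
have <- : ad l1 l2 *m dg a b *m invmx (ad l1 l2) = dg b a.
  by rewrite ad_inv // addgM adM; congr dg; rewrite mulrAC mulfV // mul1r.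
by apply: GM; [apply: GM|apply: GV].
Qed.

Lemma scalar_member a b : G (dg a b) -> G (dg (a * b) (a * b)).
Proof. by move=> h; have := GM h (swap_member h); rewrite dgM [b * a]mulrC. Qed.

Lemma ratio_member a b : G (dg a b) -> G (dg (a / b) (b / a)).
Proof.
move=> h; have [a0 b0] := diag_member_nz h.
by have := GM h (GV (swap_member h)); rewrite dg_inv // dgM.
Qed.

Lemma antidiag_member a b : a != 0 -> b != 0 ->
  G (ad a b) <-> G (dg (l2^-1 * b) (l1^-1 * a)).
Proof.
move=> a0 b0; split => h; first by have := GM (GV Gw) h; rewrite ad_inv // adM.
by have := GM Gw h; rewrite addgM !mulrA !mulfV // !mul1r.
Qed.

(* By irreducibility, some diagonal element of G is not scalar: otherwise
   the line spanned by (l1, c), c^2 = l1 l2, would be invariant. *)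
Lemma nonscalar_diag_member : (forall a b, G (dg a b) -> a = b) -> False.
Proof.
move=> hs; have [c hc] := exists_nth_root (l1 * l2) (isT : (0 < 2)%N).
apply: (conj_irreducible hP0 hirr); exists (cv l1 c); split => [|x Gx].
  exact: cv_nz.
case: (hmono Gx) => [/diag_dg [ex a0 b0]|/antidiag_ad [ex a0 b0]]; rewrite ex in Gx.
  by exists (x 0 0); rewrite {1}ex -(hs _ _ Gx) /dg mk2_cv cv_scale; congr cv; ring.
have e := hs _ _ ((antidiag_member a0 b0).1 Gx).
have e' : x 1 0 * l1 = x 0 1 * l2.
  have h1 : x 1 0 = l2 * (l2^-1 * x 1 0) by rewrite mulrA mulfV // mul1r.
  have h2 : x 0 1 = l1 * (l1^-1 * x 0 1) by rewrite mulrA mulfV // mul1r.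
  by rewrite h1 [in RHS]h2 e; ring.
exists (l1^-1 * x 0 1 * c); rewrite {1}ex /ad mk2_cv cv_scale; congr cv; first by field.
rewrite mul0r addr0 e'.
have -> : l1^-1 * x 0 1 * c * c = l1^-1 * x 0 1 * c ^+ 2 by rewrite expr2 mulrA.
by rewrite hc; field.
Qed.

(* Case 4: G contains the torus diag(s, s^-1) and the scalars, hence all
   invertible diagonal matrices, hence (via w) all monomial matrices. *)
Lemma full_monomial_members :
  contains_curve (fun s => dg s s^-1) -> contains_curve (fun s => dg s s) ->
  forall x, G x <-> monomial x.
Proof.
move=> hS hT.
have hd a b : a != 0 -> b != 0 -> G (dg a b).
  move=> a0 b0; have [sg hsg] := exists_nth_root (a * b) (isT : (0 < 2)%N).
  have sg0 : sg != 0.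
    by apply: contraNneq (mulf_neq0 a0 b0) => e; rewrite -hsg e expr2 mulr0.
  have := GM (hT _ sg0) (hS (a / sg) (mulf_neq0 a0 (invr_neq0 sg0))).
  rewrite dgM invf_div; congr (G (dg _ _)); first by field.
  by rewrite mulrA -expr2 hsg; field.
move=> x; split; first exact: hmono.
case=> [/diag_dg [ex a0 b0]|/antidiag_ad [ex a0 b0]]; rewrite ex; first exact: hd.
by apply/(antidiag_member a0 b0)/hd; apply: mulf_neq0; rewrite ?invr_eq0.
Qed.

(* If G contains the torus but only finitely many scalars, then the
   d with diag(d, 1) in G form a finite subgroup of C^*: the m-th roots of
   unity for some m > 0. *)
Lemma diag_ratio_roots : contains_curve (fun s => dg s s^-1) ->
  meets_finitely (fun s => dg s s) ->
  exists m : nat, (0 < m)%N /\ forall d, G (dg d 1) <-> d ^+ m = 1.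
Proof.
move=> hS [qT [qT0 hqT]]; have [rT hrT] := roots_in qT0.
have in_rT d : G (dg d 1) -> d \in rT.
  move=> hD; have [d0 _] := diag_member_nz hD; apply: hrT.
  by have := scalar_member hD; rewrite mulr1 => /(hqT _ d0).
pose L := filter (fun d => holds (G (dg d 1))) (undup rT).
have memL d : d \in L <-> G (dg d 1).
  rewrite mem_filter; split => [/andP [/holdsP //]|hD].
  by rewrite mem_undup in_rT // andbT; apply/holdsP.
have uL : uniq L by rewrite filter_uniq // undup_uniq.
have L1 : 1 \in L by apply/memL; rewrite dg1; exact: G1.
have Lmul x y : x \in L -> y \in L -> x * y \in L.
  by move=> /memL hx /memL hy; apply/memL; have := GM hx hy; rewrite dgM mulr1.
have L0 : 0 \notin L by apply/negP => /memL /diag_member_nz [] /eqP.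
exists (size L); split; first by case: L L1 {memL uL Lmul L0}.
by move=> d; rewrite -memL (finite_subgroup_roots uL L1 L0 Lmul d); split => /eqP.
Qed.

Lemma dihedral_members : contains_curve (fun s => dg s s^-1) ->
  meets_finitely (fun s => dg s s) ->
  exists m : nat, [/\ (0 < m)%N,
    (forall a b, a != 0 -> b != 0 -> (G (dg a b) <-> (a * b) ^+ m = 1)),
    (forall a b, a != 0 -> b != 0 -> (G (ad a b) <-> (a * b) ^+ m = (l1 * l2) ^+ m))
    & ((l1 * l2) ^+ m = 1 \/ (l1 * l2) ^+ m = -1)].
Proof.
move=> hS hT; have [m [m0 hm]] := diag_ratio_roots hS hT.
have hdiag a b : a != 0 -> b != 0 -> (G (dg a b) <-> (a * b) ^+ m = 1).
  move=> a0 b0; rewrite -hm; split => h.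
    by have := GM h (hS b b0); rewrite dgM mulfV.
  by have := GM h (hS _ (invr_neq0 b0)); rewrite dgM invrK mul1r mulfK.
exists m; split => //.
- move=> a b a0 b0; rewrite antidiag_member // hdiag ?mulf_neq0 ?invr_neq0 //.
  have -> : l2^-1 * b * (l1^-1 * a) = (a * b) / (l1 * l2) by rewrite invfM; ring.
  rewrite expr_div_n; have c0 : (l1 * l2) ^+ m != 0 by rewrite expf_neq0 // mulf_neq0.
  by split => [e|->]; [apply: (mulIf (invr_neq0 c0)); rewrite e mulfV | rewrite mulfV].
- have := GM Gw Gw; rewrite adM hdiag ?mulf_neq0 // [l2 * l1]mulrC -expr2 exprAC.
  by move/eqP; rewrite sqrf_eq1 => /orP [] /eqP; [left|right].
Qed.

(* A connected Y containing 1 inside H stays in the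
   diagonal part of G (the diagonal and antidiagonal parts are disjoint
   closed sets); if the torus meets G finitely, Y consists of scalars (the
   ratio of the diagonal entries takes finitely many values), and if
   moreover G has finitely many scalars, Y is trivial. *)
Section IdentityComponent.
Variable Y : mx -> Prop.
Hypotheses (hYH : forall x, Y x -> H x) (hYc : zariski_connected Y) (hY1 : Y 1%:M).
Local Notation Pi := (invmx P0).

(* Separate by the entries (0,1) (zero on the diagonal part) and (0,0)
   (zero on the antidiagonal part) of the conjugated matrix. *)
Lemma component_diag x : Y x -> exists a b, Pi *m x *m P0 = dg a b.
Proof.
move=> Yx; have GY y : Y y -> G (Pi *m y *m P0) by move/hYH/(conj_setE hP0).
pose E (rho : C) := if rho == 0 then conj_entry Pi P0 0 1 else conj_entry Pi P0 0 0.
have base : (E 0).@[mx_coords 1%:M] = 0.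
  by rewrite /E eqxx conj_entryE mulmx1 mulVmx // mxE.
have cover y : Y y -> exists2 rho, rho \in [:: 0; 1] & (E rho).@[mx_coords y] = 0.
  move/GY/hmono => [[e _ _]|[e _ _]].
    by exists 0; rewrite ?inE ?eqxx // /E eqxx conj_entryE.
  by exists 1; rewrite ?inE ?eqxx ?orbT // /E oner_eq0 conj_entryE.
have disj y : Y y -> forall rho, rho \in [:: 0; 1] -> rho != 0 ->
    (E rho).@[mx_coords y] = 0 -> (E 0).@[mx_coords y] = 0 -> False.
  move=> Yy rho _ rn; rewrite /E eqxx (negbTE rn) !conj_entryE => e0 e1.
  by case: (hmono (GY y Yy)) => [[_ _]|[_ _]]; rewrite ?e0 ?e1 ?mul0r ?eqxx.
have := connected_in_one_fiber hYc cover disj hY1 base Yx.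
rewrite /E eqxx conj_entryE => e01.
case: (hmono (GY x Yx)) => [/diag_dg [ex _ _]|[_ _]]; last by rewrite e01 mul0r eqxx.
by exists ((Pi *m x *m P0) 0 0), ((Pi *m x *m P0) 1 1).
Qed.

(* Separate by x00 - rho x11, rho ranging over the finitely many ratios
   a / b with diag(a, b) in G. *)
Lemma component_scalar : meets_finitely (fun s => dg s s^-1) ->
  forall x, Y x -> exists a, x = a%:M /\ G (dg a a).
Proof.
move=> [qS [qS0 hqS]]; have [rS hrS] := roots_in qS0.
have diagY y : Y y -> exists a b, [/\ Pi *m y *m P0 = dg a b, G (dg a b), a != 0 & b != 0].
  move=> Yy; have [a [b ey]] := component_diag Yy.
  have Gy := conj_setE hP0 (hYH Yy); rewrite ey in Gy.
  by have [a0 b0] := diag_member_nz Gy; exists a, b.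
pose E (rho : C) := conj_entry Pi P0 0 0 - rho *: conj_entry Pi P0 1 1.
have EE y rho : (E rho).@[mx_coords y] = (Pi *m y *m P0) 0 0 - rho * (Pi *m y *m P0) 1 1.
  by rewrite mevalB mevalZ !conj_entryE.
have base : (E 1).@[mx_coords 1%:M] = 0.
  by rewrite EE mulmx1 mulVmx // !mxE mul1r subrr.
have cover y : Y y -> exists2 rho, rho \in rS & (E rho).@[mx_coords y] = 0.
  move=> Yy; have [a [b [ey Gab a0 b0]]] := diagY y Yy; exists (a / b).
    apply/hrS/hqS; first by rewrite mulf_neq0 ?invr_neq0.
    by rewrite invf_div; apply: ratio_member.
  by rewrite EE ey /dg mk2_00 mk2_11; field.
have disj y : Y y -> forall rho, rho \in rS -> rho != 1 ->
    (E rho).@[mx_coords y] = 0 -> (E 1).@[mx_coords y] = 0 -> False.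
  move=> Yy rho _ rn; have [a [b [ey _ _ b0]]] := diagY y Yy.
  rewrite !EE ey /dg mk2_00 mk2_11 mul1r => /eqP; rewrite subr_eq0 => /eqP -> /eqP.
  by rewrite subr_eq0 -{2}[b]mul1r (inj_eq (mulIf b0)) (negbTE rn).
move=> x Yx; have [a [b [ex Gab _ _]]] := diagY x Yx.
have eab : a = b.
  have := connected_in_one_fiber hYc cover disj hY1 base Yx.
  by rewrite EE ex /dg mk2_00 mk2_11 mul1r => /eqP; rewrite subr_eq0 => /eqP.
exists a; split; last by rewrite {2}eab.
by rewrite -[x](conjK hP0) ex -eab dg_scalar conj_scalar.
Qed.

(* Separate by x00 - rho, rho ranging over the finitely many scalars in G. *)
Lemma component_trivial : meets_finitely (fun s => dg s s^-1) ->
  meets_finitely (fun s => dg s s) -> forall x, Y x -> x = 1%:M.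
Proof.
move=> hS [qT [qT0 hqT]]; have scalY := component_scalar hS.
have [rT hrT] := roots_in qT0.
pose E (rho : C) := conj_entry Pi P0 0 0 - rho%:MP.
have EE y rho : (E rho).@[mx_coords y] = (Pi *m y *m P0) 0 0 - rho.
  by rewrite mevalB mevalC !conj_entryE.
have scalE a : (Pi *m a%:M *m P0) 0 0 = a.
  by rewrite mul_mx_scalar -scalemxAl mulVmx // scalemx1 mxE mulr1n.
have base : (E 1).@[mx_coords 1%:M] = 0 by rewrite EE scalE subrr.
have cover y : Y y -> exists2 rho, rho \in rT & (E rho).@[mx_coords y] = 0.
  move=> Yy; have [a [ey Ga]] := scalY y Yy; have [a0 _] := diag_member_nz Ga.
  by exists a; [apply/hrT/hqT | rewrite EE ey scalE subrr].
have disj y : Y y -> forall rho, rho \in rT -> rho != 1 ->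
    (E rho).@[mx_coords y] = 0 -> (E 1).@[mx_coords y] = 0 -> False.
  move=> Yy rho _ rn; have [a [ey _]] := scalY y Yy.
  rewrite !EE ey scalE => /eqP; rewrite subr_eq0 => /eqP -> /eqP.
  by rewrite subr_eq0 (negbTE rn).
move=> x Yx; have [a [ex _]] := scalY x Yx.
have := connected_in_one_fiber hYc cover disj hY1 base Yx.
by rewrite EE ex scalE => /eqP; rewrite subr_eq0 => /eqP ->.
Qed.

End IdentityComponent.

(* Case 3.  If G meets the torus finitely, the identity component consists
   of scalars, so by bicyclicity G is commutative up to a scalar twist k;
   comparing w diag(a, b) with diag(a, b) w gives b = +-a. *)
Lemma diag_sign_twist : meets_finitely (fun s => dg s s^-1) ->
  exists k : C, [/\ k != 0,
    ((forall g, identity_component H g -> g = 1%:M) -> k = 1) &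
    forall a b, G (dg a b) -> exists e1 e2 : nat,
      k ^+ e1 * b = k ^+ e2 * a /\ k ^+ e1 * a = k ^+ e2 * b].
Proof.
move=> hS.
have scalK g : identity_component H g -> exists c, g = c%:M.
  case=> Y [hYH hYc hY1 hYg].
  by have [a [-> _]] := component_scalar hYH hYc hY1 hS hYg; exists a.
have [k [k0 k1 hcomm]] := bicyclic_twisted_comm (subgroup_unit hsub) scalK hbic.
exists k; split => // a b hab; have [e1 [e2 e]] := hcomm _ _ Gw hab.
exists e1, e2.
have {}e : k ^+ e1 *: (ad l1 l2 *m dg a b) = k ^+ e2 *: (dg a b *m ad l1 l2).
  have := congr1 (fun z => invmx P0 *m z *m P0) e => /=.
  by rewrite !conjM // -!scalemxAr -!scalemxAl !(conjVK hP0).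
move: (congr1 (fun z : mx => z 0 1) e) (congr1 (fun z : mx => z 1 0) e).
rewrite addgM dgadM /= !mxE /= => e01 e10; split.
  by apply: (mulIf l10); rewrite -!mulrA [b * l1]mulrC e01; ring.
by apply: (mulIf l20); rewrite -!mulrA [a * l2]mulrC e10; ring.
Qed.

Lemma diag_sign : meets_finitely (fun s => dg s s^-1) ->
  forall a b, G (dg a b) -> b = a \/ b = - a.
Proof.
move=> hS a b h; have [k [k0 _ hk]] := diag_sign_twist hS.
have [_ b0] := diag_member_nz h; have [e1 [e2 [h1 h2]]] := hk _ _ h.
exact: twisted_sign k0 b0 h1 h2.
Qed.

(* The scalars lie in G: otherwise the identity component is trivial, k = 1,
   and all diagonal elements of G are scalar, contradicting irreducibility. *)
Lemma scalars_contained : meets_finitely (fun s => dg s s^-1) ->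
  contains_curve (fun s => dg s s).
Proof.
move=> hS; case: scalar_dichotomy => // hT; exfalso.
apply: nonscalar_diag_member => a b h; have [k [_ k1 hk]] := diag_sign_twist hS.
have {}k1 : k = 1.
  by apply: k1 => g [Y [hYH hYc hY1 hYg]]; exact: (component_trivial hYH hYc hY1 hS hT hYg).
by have [e1 [e2 [h1 _]]] := hk _ _ h; move: h1; rewrite k1 !expr1n !mul1r.
Qed.

Lemma diag_members_sq : meets_finitely (fun s => dg s s^-1) ->
  forall a b, a != 0 -> b != 0 -> (G (dg a b) <-> a ^+ 2 = b ^+ 2).
Proof.
move=> hS; have hT := scalars_contained hS.
have [e [e0 Ge]] : exists e, e != 0 /\ G (dg e (- e)).
  apply: NNPP => hn; apply: nonscalar_diag_member => a b h.
  case: (diag_sign hS h) => // eb; case: hn; exists a.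
  by have [a0 _] := diag_member_nz h; rewrite -eb.
move=> a b a0 b0; split => [/(diag_sign hS) [] ->|]; rewrite ?sqrrN //.
move/eqP; rewrite eqf_sqr => /orP [] /eqP ->; first exact: hT.
have nb0 : - b / e != 0 by rewrite mulf_neq0 ?oppr_eq0 ?invr_eq0.
by have := GM Ge (hT _ nb0); rewrite dgM; congr (G (dg _ _)); field.
Qed.

(* Rescaling the second coordinate by d, d^2 = l2 / l1, turns G into the
   group {+-1}^2 x| G_m of monomial matrices with entries of equal square. *)
Lemma klein_conj : meets_finitely (fun s => dg s s^-1) -> conj_to H (@Vgroup C).
Proof.
move=> hS; have hd := diag_members_sq hS.
have [d hd2] := exists_nth_root (l2 / l1) (isT : (0 < 2)%N).
have d0 : d != 0.
  apply/eqP => d00; move/eqP: hd2; rewrite d00 expr2 mulr0 eq_sym.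
  by apply/negP; rewrite mulf_neq0 ?invr_neq0.
have UQ : dg 1 d \in unitmx by rewrite dg_unit ?oner_neq0.
have iQ : invmx (dg 1 d) = dg 1 d^-1 by rewrite dg_inv ?invr1 ?oner_neq0.
exists (P0 *m dg 1 d); split; first by rewrite unitmx_mul hP0 UQ.
have conjQ x : conj_set (P0 *m dg 1 d) H x <-> G (dg 1 d *m x *m dg 1 d^-1).
  by rewrite conj_setM // iQ.
have hd' a b : a != 0 -> b != 0 ->
    (conj_set (P0 *m dg 1 d) H (dg a b) <-> a ^+ 2 = b ^+ 2).
  move=> a0 b0; rewrite conj_setM // iQ !dgM mul1r mulr1 (_ : d * b * d^-1 = b) ?hd //.
  by field.
have ha' a b : a != 0 -> b != 0 ->
    (conj_set (P0 *m dg 1 d) H (ad a b) <-> a ^+ 2 = b ^+ 2).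
  move=> a0 b0; rewrite conj_setM // iQ dgadM addgM mul1r mulr1.
  rewrite antidiag_member ?mulf_neq0 ?invr_neq0 // hd ?mulf_neq0 ?invr_neq0 //.
  have -> : (l2^-1 * (d * b)) ^+ 2 = b ^+ 2 / (l1 * l2).
    by rewrite !exprMn hd2; field_ctx.
  have -> : (l1^-1 * (a * d^-1)) ^+ 2 = a ^+ 2 / (l1 * l2).
    by rewrite !exprMn !exprVn hd2; field_ctx.
  have c0 : (l1 * l2)^-1 != 0 by rewrite invr_eq0 mulf_neq0.
  by split => [/(mulIf c0) ->|->].
apply: monomial_members hd' ha' => x /conjQ /hmono hy.
have -> : x = dg 1 d^-1 *m (dg 1 d *m x *m dg 1 d^-1) *m dg 1 d.
  by rewrite -iQ !mulmxA mulVmx // mul1mx mulmxKV.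
by apply: monomial_dg_mul hy; rewrite ?oner_neq0 ?invr_neq0.
Qed.

End Antidiagonal.

Lemma classification_exists : case1 H \/ case2 H \/ case3 H \/ case4 H.
Proof.
have [l1 [l2 [l10 l20 Gw]]] := exists_antidiag.
case: torus_dichotomy => hS; last by right; right; left; exact: klein_conj Gw hS.
case: scalar_dichotomy => hT.
  by right; right; right; exists P0; split => // x; exact: full_monomial_members Gw hS hT x.
have [m [m0 hd ha hsign]] := dihedral_members l10 l20 Gw hS hT.
have members s : (l1 * l2) ^+ m = s -> forall x, G x <->
    (diag_nonsing x /\ (x 0 0 * x 1 1) ^+ m = 1) \/
    (antidiag_nonsing x /\ (x 0 1 * x 1 0) ^+ m = s).
  by move=> <- x; exact: (monomial_members hmono hd ha x).
by case: hsign => /members hs; [right; left|left]; exists m; split => //; exists P0.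
Qed.

End MonomialGroup.

(* Exclusivity of the four cases, via conjugation invariants.  Here the
   characteristic is used: D_m^{+-} has no element of determinant 4, and
   -1 != 1. *)
Section Exclusivity.
Variable C : closedFieldType.
Hypothesis hC : [pchar C] =i pred0.
Notation mx := 'M[C]_2.

Lemma natr_eq0 n : ((n%:R : C) == 0) = (n == 0)%N.
Proof. by rewrite (pcharf0P _).1. Qed.

Lemma natr_eq1 n : (n%:R : C) = 1 -> n = 1%N.
Proof.
case: n => [|k]; first by move/eqP; rewrite eq_sym oner_eq0.
by rewrite -natr1 => /eqP; rewrite -subr_eq0 addrK natr_eq0 => /eqP ->.
Qed.

Lemma m1_neq1 : (-1 : C) != 1.
Proof.
apply/eqP => e; have : (2%:R : C) == 0 by rewrite mulr2n -{1}e addNr.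
by rewrite natr_eq0.
Qed.

Definition conj_invariant (Phi : mx -> Prop) : Prop :=
  forall P x, P \in unitmx -> (Phi (P *m x *m invmx P) <-> Phi x).

Lemma conj_to_transfer (Hs G1 G2 Phi : mx -> Prop) : conj_invariant Phi ->
  conj_to Hs G1 -> conj_to Hs G2 ->
  (exists x, G1 x /\ Phi x) -> exists y, G2 y /\ Phi y.
Proof.
move=> hPhi [P1 [uP1 h1]] [P2 [uP2 h2]] [x [G1x Px]].
exists (invmx P2 *m (P1 *m x *m invmx P1) *m P2); split.
  by apply/h2; rewrite /conj_set conjK //; apply/h1.
by rewrite -{2}[P2]invmxK !hPhi ?unitmx_inv.
Qed.

Lemma det_conj (P x : mx) : P \in unitmx -> \det (P *m x *m invmx P) = \det x.
Proof.
move=> uP; rewrite !det_mulmx det_inv mulrC mulrA mulVf ?mul1r //.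
by rewrite -unitfE -unitmxE.
Qed.

Lemma det_invariant c : conj_invariant (fun x => \det x = c).
Proof. by move=> P x uP; rewrite det_conj. Qed.

Lemma det_trace_invariant c : conj_invariant (fun x => \det x = c /\ \tr x != 0).
Proof. by move=> P x uP; rewrite det_conj // mxtrace_mulC mulmxA mulVmx // mul1mx. Qed.

Lemma square_scalar_invariant : conj_invariant (fun x => exists a, x *m x = a%:M).
Proof.
move=> P x uP.
have -> : P *m x *m invmx P *m (P *m x *m invmx P) = P *m (x *m x) *m invmx P.
  by rewrite !mulmxA mulmxKV.
split => [[a ha]|[a ->]]; exists a; last exact: conj_scalar.
by rewrite -(conjVK uP (x *m x)) ha -{2}(invmxK P) conj_scalar ?unitmx_inv.
Qed.

Lemma dihedral_det m (x : mx) : Dminus m x \/ Dplus m x -> (\det x ^+ 2) ^+ m = 1.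
Proof.
case=> [[[/diag_dg [ex _ _] e]|[/antidiag_ad [ex _ _] e]]|
        [[/diag_dg [ex _ _] e]|[/antidiag_ad [ex _ _] e]]];
  by rewrite ex ?det_dg ?det_ad ?sqrrN -exprM mulnC exprM e ?sqrrN expr1n.
Qed.

Lemma dihedral_det_neq4 m (x : mx) : (0 < m)%N -> Dminus m x \/ Dplus m x -> \det x != 4.
Proof.
move=> m0 /dihedral_det hx; apply/eqP => d4; move: hx.
by rewrite d4 -!natrX -(prednK m0) => /natr_eq1 /eqP; rewrite expnS muln_eq1 => /andP [].
Qed.

Lemma dihedral_no_det4 (Hs G2 : mx -> Prop) m : (0 < m)%N ->
  conj_to Hs (Dminus m) \/ conj_to Hs (Dplus m) -> conj_to Hs G2 -> G2 (dg 2 2) -> False.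
Proof.
move=> m0 hD h2 G22.
have w : exists x, G2 x /\ \det x = 4 by exists (dg 2 2); rewrite det_dg -natrM.
by case: hD => hD; have [y [Dy /eqP]] := conj_to_transfer (det_invariant 4) h2 hD w;
  apply/negP; apply: dihedral_det_neq4 m0 _; [left|right].
Qed.

Lemma two_neq0 : (2 : C) != 0. Proof. by rewrite natr_eq0. Qed.

(* In {+-1}^2 x| G_m every square is scalar, unlike diag(1, 2)^2. *)
Lemma klein_not_full (Hs : mx -> Prop) :
  conj_to Hs (@Vgroup C) -> conj_to Hs (@fullmonomial C) -> False.
Proof.
move=> hV hM; pose Nsq (x : mx) := ~ exists a, x *m x = a%:M.
have hN : conj_invariant Nsq.
  by move=> P x uP; split => h1 h2; apply: h1; apply/(square_scalar_invariant _ uP).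
have w : exists x, fullmonomial x /\ Nsq x.
  exists (dg 1 2); split; first by left; apply: dg_diag; rewrite ?oner_neq0 ?two_neq0.
  case=> a; rewrite dgM -dg_scalar /dg => /(congr1 (fun z : mx => (z 0 0, z 1 1))).
  rewrite /= !mk2_00 !mk2_11 => -[<-]; rewrite mulr1 -natrM => /natr_eq1.
  by [].
have [x [Vx]] := conj_to_transfer hN hM hV w; apply.
case: Vx => [[/diag_dg [ex _ _] e]|[/antidiag_ad [ex _ _] e]]; rewrite ex.
  by exists (x 0 0 ^+ 2); rewrite dgM -!expr2 e dg_scalar.
by exists (x 0 1 * x 1 0); rewrite adM [x 1 0 * _]mulrC dg_scalar.
Qed.

(* D_m^- and D_k^+ are never conjugate: comparing determinants, (-1)^m = 1
   and every k-th root of unity is an m-th root of unity; then an element of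
   D_m^- of determinant -e with e^m = -1 has no counterpart in D_k^+. *)
Section DminusDplus.
Variables (Hs : mx -> Prop) (m k : nat).
Hypotheses (m0 : (0 < m)%N) (hm : conj_to Hs (Dminus m)) (hk : conj_to Hs (Dplus k)).

Lemma dminus_sign : (-1 : C) ^+ m = 1.
Proof.
have w : exists x : mx, Dplus k x /\ \det x = -1.
  exists (ad 1 1); rewrite det_ad mulr1; split => //.
  right; rewrite /ad mk2_01 mk2_10 mulr1 expr1n.
  by split => //; apply: ad_antidiag; rewrite ?oner_neq0.
have [y [[[/diag_dg [ey _ _] e]|[/antidiag_ad [ey _ _] e]] dy]] :=
  conj_to_transfer (det_invariant (-1)) hk hm w; move: dy; rewrite ey.
  by rewrite det_dg => <-.
rewrite det_ad => /eqP; rewrite eqr_opp => /eqP e1.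
by move: e; rewrite e1 expr1n => /eqP; rewrite eq_sym (negbTE m1_neq1).
Qed.

Lemma dplus_roots_dminus (d : C) : d != 0 -> d ^+ k = 1 -> d ^+ m = 1.
Proof.
move=> d0 dk; pose Phi (x : mx) := \det x = d /\ \tr x != 0.
have w : exists x : mx, Dplus k x /\ Phi x.
  case: (eqVneq d (-1)) => [dm1|dm1].
    have [i hi] := exists_nth_root (-1 : C) (isT : (0 < 2)%N).
    have i0 : i != 0.
      by apply/eqP => i00; move/eqP: hi; rewrite i00 expr0n /= eq_sym oppr_eq0 oner_eq0.
    exists (dg i i); rewrite /Phi det_dg tr_dg -expr2 hi -dm1; split.
      by left; rewrite /dg mk2_00 mk2_11 -expr2 hi -dm1; split => //; apply: dg_diag.
    by split => //; rewrite -mulr2n -mulr_natr mulf_neq0 ?two_neq0.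
  exists (dg d 1); rewrite /Phi det_dg tr_dg mulr1; split.
    left; rewrite /dg mk2_00 mk2_11 mulr1.
    by split => //; apply: dg_diag; rewrite ?oner_neq0.
  by split => //; rewrite -[1]opprK subr_eq0.
have [y [[[/diag_dg [ey _ _] e]|[/antidiag_ad [ey _ _] e]] [dy ty]]] :=
  conj_to_transfer (det_trace_invariant d) hk hm w.
  by rewrite -dy ey det_dg.
by move: ty; rewrite ey tr_ad eqxx.
Qed.

Lemma dminus_dplus_absurd : False.
Proof.
have [e he] := exists_nth_root (-1 : C) m0.
have e0 : e != 0.
  apply/eqP => e00; move/eqP: he.
  by rewrite e00 expr0n eqn0Ngt m0 /= eq_sym oppr_eq0 oner_eq0.
have w : exists x : mx, Dminus m x /\ \det x = - e.
  exists (ad 1 e); rewrite det_ad mul1r; split => //.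
  right; rewrite /ad mk2_01 mk2_10 mul1r.
  by split => //; apply: ad_antidiag; rewrite ?oner_neq0.
have [y [[[/diag_dg [ey _ _] ek]|[/antidiag_ad [ey _ _] ek]] dy]] :=
  conj_to_transfer (det_invariant (- e)) hm hk w; rewrite ey in dy.
  move: ek; rewrite -det_dg dy => /dplus_roots_dminus.
  rewrite oppr_eq0 exprNn dminus_sign mul1r he => /(_ e0) /eqP.
  by rewrite (negbTE m1_neq1).
move: dy ek; rewrite det_ad => /eqP; rewrite eqr_opp => /eqP -> /(dplus_roots_dminus e0).
by rewrite he => /eqP; rewrite (negbTE m1_neq1).
Qed.

End DminusDplus.

Lemma cases_exclusive (Hs : mx -> Prop) :
  [/\ ~ (case1 Hs /\ case2 Hs), ~ (case1 Hs /\ case3 Hs), ~ (case1 Hs /\ case4 Hs),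
      ~ (case2 Hs /\ case3 Hs) & ~ (case2 Hs /\ case4 Hs) /\ ~ (case3 Hs /\ case4 Hs)].
Proof.
have V22 : Vgroup (dg (2 : C) 2).
  by left; rewrite /dg mk2_00 mk2_11; split => //; apply: dg_diag; rewrite two_neq0.
have M22 : fullmonomial (dg (2 : C) 2) by left; apply: dg_diag; rewrite two_neq0.
split.
- by move=> [[m [m0 h1]] [k [k0 h2]]]; exact: dminus_dplus_absurd m0 h1 h2.
- by move=> [[m [m0 h1]] h3]; exact: dihedral_no_det4 m0 (or_introl h1) h3 V22.
- by move=> [[m [m0 h1]] h4]; exact: dihedral_no_det4 m0 (or_introl h1) h4 M22.
- by move=> [[m [m0 h2]] h3]; exact: dihedral_no_det4 m0 (or_intror h2) h3 V22.
- split; first by move=> [[m [m0 h2]] h4]; exact: dihedral_no_det4 m0 (or_intror h2) h4 M22.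
  by move=> [h3 h4]; exact: klein_not_full h3 h4.
Qed.

End Exclusivity.

Unset Implicit Arguments.

Theorem mainTheorem11 (C : closedFieldType) (hC : [pchar C] =i pred0)
  (H : 'M[C]_2 -> Prop) :
  algebraic_subgroup_GL2 H ->
  imprimitive_GL2 H ->
  bicyclic_quotient H (identity_component H) ->
  exactly_one4 (case1 H) (case2 H) (case3 H) (case4 H).
Proof.
move=> [hsub [S hcl]] [hirr [P0 [hP0 hmono]]] hbic; split.
  exact: (classification_exists hsub hP0 hmono hirr hcl hbic).
exact: cases_exclusive.
Qed.
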